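(* For all objects $\mathcal{L}_1,\mathcal{L}_2$ of $\mathbf{Cal^0_{Sym}}$ there are isomorphisms in $\mathbf{Chu}_{2_0}$ $$\alpha_{\mathcal{L}_1\mathcal{L}_2}:\mathcal{F}(\mathcal{L}_1)\otimes_C\mathcal{F}(\mathcal{L}_2)\to\mathcal{F}(\mathcal{L}_1\circledast\mathcal{L}_2),$$ natural in $\mathcal{L}_1$ and $\mathcal{L}_2$, i.e. $\mathcal{F}(f_1\circledast f_2)\circ\alpha=\alpha\circ(\mathcal{F}(f_1)\otimes_C\mathcal{F}(f_2))$ for all arrows $f_1,f_2$ of $\mathbf{Cal^0_{Sym}}$. Consequently, the full subcategory of $\mathbf{Chu}_{2_0}$ consisting of objects isomorphic to objects in the image of $\mathcal{F}$ is closed under $\otimes_C$.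
   Context: Lattice notation: $\Sigma_i,\Sigma_i'$ atoms and coatoms of $\mathcal{L}_i$; $\Sigma[a]$, $\Sigma'[a]$; $\mathsf{Cl}(\omega)=\{\Sigma[a];a\in\omega\}$; $f^\circ(b):=\bigvee\{a;f(a)\le b\}$. $\mathbf{Cal^0_{Sym}}$: objects are complete atomistic coatomistic lattices with $\Sigma[x]\cup\Sigma[y]\ne\Sigma$ for all coatoms $x,y$ and $\Sigma'[p]\cup\Sigma'[q]\ne\Sigma'$ for all atoms $p,q$; arrows preserve arbitrary joins, send atoms to atoms or $0$, with $f^\circ$ sending coatoms to coatoms or $1$. $\mathcal{L}_1\circledast\mathcal{L}_2:=\{\bigcap\omega;\omega\subseteq\Sigma'_\circledast\cup\{\Sigma_1\times\Sigma_2\}\}$ where $\Sigma'_\circledast$ is the set of $R\subsetneqq\Sigma_1\times\Sigma_2$ with $\{q_1;(q_1,p_2)\in R\}\in\mathsf{Cl}(\Sigma_1'\cup\{1\})$ and $\{q_2;(p_1,q_2)\in R\}\in\mathsf{Cl}(\Sigma_2'\cup\{1\})$ for all $(p_1,p_2)$; $f_1\circledast f_2$ is the join-preserving map sending the atom $\{(p_1,p_2)\}$ to $\{(f_1(p_1),f_2(p_2))\}$ if both are nonzero and to $0$ otherwise. $\mathbf{Chu}_{2_0}$: objects $(A,r,X)$ with $A,X$ pointed sets, $r:A\times X\to\{0,1\}$ vanishing at base points; arrows $(f,g):(A,r,X)\to(B,s,Y)$, pointed $f:A\to B$, $g:Y\to X$, $s(f(a),y)=r(a,g(y))$; composition $(f',g')\circ(f,g)=(f'\circ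 f,g\circ g')$. $(A,r,X)^\perp=(X,\check r,A)$. Smash product $A\wedge B:=((A\setminus\{0_A\})\times(B\setminus\{0_B\}))\cup\{0_\sharp\}$. Tensor: $\mathsf{A}_1\otimes_C\mathsf{A}_2:=(A_1\wedge A_2,t,\mathbf{Chu}_{2_0}(\mathsf{A}_1,\mathsf{A}_2^\perp))$, the hom-set pointed by the constant arrow (both maps constant at base points), $t((a_1,a_2),(f,g)):=r_1(a_1,g(a_2))=r_2(a_2,f(a_1))$; on arrows $(f_i,g_i):\mathsf{A}_i\to\mathsf{B}_i$, $f_1\otimes_C f_2$ sends $(a_1,a_2)\mapsto(f_1(a_1),f_2(a_2))$ if both nonzero (else $0_\sharp$) and its second component sends $(f,g)\in\mathbf{Chu}_{2_0}(\mathsf{B}_1,\mathsf{B}_2^\perp)$ to $(g_2\circ f\circ f_1,g_1\circ g\circ f_2)$. $\mathcal{F}(\mathcal{L})=(\Sigma\cup\{0\},r,\Sigma'\cup\{1\})$ pointed by $0$ and $1$, $r(p,x)=0\iff p\le x$; $\mathcal{F}(f)=(f,f^\circ)$. *)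

From Stdlib Require Import ClassicalEpsilon FunctionalExtensionality
  PropExtensionality ProofIrrelevance.

Set Implicit Arguments.
Unset Strict Implicit.

(** * Complete lattices (order + arbitrary joins) *)

Record CLat := {
  lcar :> Type;
  lle : lcar -> lcar -> Prop;
  lle_refl : forall x, lle x x;
  lle_trans : forall x y z, lle x y -> lle y z -> lle x z;
  lle_anti : forall x y, lle x y -> lle y x -> x = y;
  lsup : (lcar -> Prop) -> lcar;
  lsup_ub : forall (S : lcar -> Prop) x, S x -> lle x (lsup S);
  lsup_least : forall (S : lcar -> Prop) y,
      (forall x, S x -> lle x y) -> lle (lsup S) y
}.
Arguments lle {c} x y.
Arguments lsup {c} S.

Definition lbot (L : CLat) : L := lsup (fun _ : L => False).
Definition ltop (L : CLat) : L := lsup (fun _ : L => True).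
Definition linf (L : CLat) (S : L -> Prop) : L :=
  lsup (fun y => forall x, S x -> lle y x).

Definition atom (L : CLat) (p : L) :=
  p <> lbot L /\ forall x, lle x p -> x = lbot L \/ x = p.
Definition coatom (L : CLat) (x : L) :=
  x <> ltop L /\ forall y, lle x y -> y = x \/ y = ltop L.

Definition SigAt (L : CLat) (a p : L) := atom p /\ lle p a.
Definition SigCo (L : CLat) (a x : L) := coatom x /\ lle a x.

Definition atomistic (L : CLat) := forall a : L, a = lsup (SigAt a).
Definition coatomistic (L : CLat) := forall a : L, a = linf (SigCo a).

(** objects of Cal^0_Sym (set equalities are extensional) *)
Definition cal_obj (L : CLat) :=
  atomistic L /\ coatomistic L /\
  (forall x y : L, coatom x -> coatom y ->
      ~ (forall p : L, atom p <-> SigAt x p \/ SigAt y p)) /\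
  (forall p q : L, atom p -> atom q ->
      ~ (forall x : L, coatom x <-> SigCo p x \/ SigCo q x)).

Record CalObj := { cobj :> CLat; cobj_ax : cal_obj cobj }.

Definition radj (L M : CLat) (f : L -> M) (b : M) : L :=
  lsup (fun a => lle (f a) b).

Record CalArr (L M : CLat) := {
  amap :> L -> M;
  ajoin : forall S : L -> Prop,
      amap (lsup S) = lsup (fun y => exists x, S x /\ y = amap x);
  aatom : forall p : L, atom p -> atom (amap p) \/ amap p = lbot M;
  acoatom : forall x : M, coatom x -> coatom (radj amap x) \/ radj amap x = ltop L
}.

Lemma bot_le (L : CLat) (x : L) : lle (lbot L) x.
Proof. apply lsup_least; intros ? []. Qed.

Lemma le_top (L : CLat) (x : L) : lle x (ltop L).
Proof. apply lsup_ub; exact I. Qed.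

Lemma arr_bot (L M : CLat) (f : CalArr L M) : f (lbot L) = lbot M.
Proof.
  apply lle_anti; [|apply bot_le].
  unfold lbot at 1; rewrite ajoin; apply lsup_least.
  intros y [x [[] _]].
Qed.

Lemma arr_mono (L M : CLat) (f : CalArr L M) (x y : L) :
  lle x y -> lle (f x) (f y).
Proof.
  intro Hxy.
  assert (E : y = lsup (fun z => z = x \/ z = y)).
  { apply lle_anti.
    - apply lsup_ub; now right.
    - apply lsup_least; intros z [->| ->]; auto using lle_refl. }
  rewrite E, ajoin. apply lsup_ub. exists x; split; auto.
Qed.

Lemma arr_galois (L M : CLat) (f : CalArr L M) (a : L) (b : M) :
  lle (f a) b <-> lle a (radj f b).
Proof.
  split; intro H.
  - apply lsup_ub; exact H.
  - eapply lle_trans; [apply arr_mono; exact H|].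
    unfold radj; rewrite ajoin; apply lsup_least.
    intros y [x [Hx ->]]; exact Hx.
Qed.

Lemma radj_top (L M : CLat) (f : CalArr L M) : radj f (ltop M) = ltop L.
Proof.
  apply lle_anti; [apply le_top|].
  apply lsup_ub, le_top.
Qed.

(** * The category Chu_{2_0} *)

Record ChuObj := {
  cA : Type; cA0 : cA;
  cX : Type; cX0 : cX;
  cr : cA -> cX -> bool;
  cr0A : forall x, cr cA0 x = false;
  cr0X : forall a, cr a cX0 = false
}.
Arguments cr : clear implicits.
Arguments cA0 : clear implicits.
Arguments cX0 : clear implicits.
Arguments cr0A : clear implicits.
Arguments cr0X : clear implicits.

Record ChuArr (U V : ChuObj) := {
  cf : cA U -> cA V;
  cg : cX V -> cX U;
  cf0 : cf (cA0 U) = cA0 V;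
  cg0 : cg (cX0 V) = cX0 U;
  cadj : forall a y, cr V (cf a) y = cr U a (cg y)
}.

Definition chu_id (U : ChuObj) : ChuArr U U.
Proof.
  refine {| cf := fun a => a; cg := fun y => y |}; reflexivity.
Defined.

Definition chu_comp (U V W : ChuObj) (v : ChuArr V W) (u : ChuArr U V) : ChuArr U W.
Proof.
  refine {| cf := fun a => cf v (cf u a); cg := fun y => cg u (cg v y) |}.
  - now rewrite (cf0 u), (cf0 v).
  - now rewrite (cg0 v), (cg0 u).
  - intros a y; now rewrite (cadj v), (cadj u).
Defined.

Definition arr_eq (U V : ChuObj) (u v : ChuArr U V) :=
  (forall a, cf u a = cf v a) /\ (forall y, cg u y = cg v y).

Definition chu_is_iso (U V : ChuObj) (u : ChuArr U V) :=
  exists v : ChuArr V U, arr_eq (chu_comp v u) (chu_id U) /\ arr_eq (chu_comp u v) (chu_id V).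

Definition chu_iso (U V : ChuObj) := exists u : ChuArr U V, chu_is_iso u.

Lemma chuarr_ext (U V : ChuObj) (u v : ChuArr U V) :
  (forall a, cf u a = cf v a) -> (forall y, cg u y = cg v y) -> u = v.
Proof.
  destruct u as [f g f0 g0 ad], v as [f' g' f0' g0' ad']; simpl; intros Hf Hg.
  apply functional_extensionality in Hf, Hg; subst.
  f_equal; apply proof_irrelevance.
Qed.

Definition chu_dual (U : ChuObj) : ChuObj :=
  {| cA := cX U; cA0 := cX0 U; cX := cA U; cX0 := cA0 U;
     cr := fun x a => cr U a x;
     cr0A := fun a => cr0X U a; cr0X := fun x => cr0A U x |}.

(** constant arrow (base point of the hom-set) *)
Definition chu_const (U V : ChuObj) : ChuArr U V.
Proof.
  refine {| cf := fun _ => cA0 V; cg := fun _ => cX0 U |}; try reflexivity.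
  intros a y; now rewrite (cr0A V), (cr0X U).
Defined.

Definition smash (A : Type) (a0 : A) (B : Type) (b0 : B) : Type :=
  option ({a : A | a <> a0} * {b : B | b <> b0}).

Definition tens_r (U V : ChuObj) (a : smash (cA0 U) (cA0 V))
  (h : ChuArr U (chu_dual V)) : bool :=
  match a with
  | None => false
  | Some (a1, a2) => cr U (proj1_sig a1) (cg h (proj1_sig a2))
  end.

Definition tensor (U V : ChuObj) : ChuObj.
Proof.
  refine {| cA := smash (cA0 U) (cA0 V); cA0 := None;
            cX := ChuArr U (chu_dual V); cX0 := chu_const U (chu_dual V);
            cr := @tens_r U V |}.
  - reflexivity.
  - intros [[a1 a2]|]; simpl; [apply cr0X|reflexivity].
Defined.

Definition tens_cg (U1 U2 V1 V2 : ChuObj) (p1 : ChuArr U1 V1) (p2 : ChuArr U2 V2)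
  (h : ChuArr V1 (chu_dual V2)) : ChuArr U1 (chu_dual U2).
Proof.
  refine {| cf := fun a : cA U1 => cg p2 (cf h (cf p1 a)) : cA (chu_dual U2);
            cg := fun y : cX (chu_dual U2) => cg p1 (cg h (cf p2 y)) : cX U1 |}.
  - simpl. rewrite (cf0 p1).
    exact (eq_trans (f_equal (cg p2) (cf0 h)) (cg0 p2)).
  - simpl. rewrite (cf0 p2).
    exact (eq_trans (f_equal (cg p1) (cg0 h)) (cg0 p1)).
  - intros a y; simpl.
    rewrite <- (cadj p2). rewrite <- (cadj p1).
    exact (cadj h (cf p1 a) (cf p2 y)).
Defined.

Definition tens_cf (U1 U2 V1 V2 : ChuObj) (p1 : ChuArr U1 V1) (p2 : ChuArr U2 V2)
  (a : smash (cA0 U1) (cA0 U2)) : smash (cA0 V1) (cA0 V2) :=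
  match a with
  | None => None
  | Some (a1, a2) =>
      match excluded_middle_informative (cf p1 (proj1_sig a1) = cA0 V1) with
      | left _ => None
      | right n1 =>
          match excluded_middle_informative (cf p2 (proj1_sig a2) = cA0 V2) with
          | left _ => None
          | right n2 => Some (exist (fun b => b <> cA0 V1) _ n1, exist (fun b => b <> cA0 V2) _ n2)
          end
      end
  end.

Definition tensor_arr (U1 U2 V1 V2 : ChuObj) (p1 : ChuArr U1 V1) (p2 : ChuArr U2 V2)
  : ChuArr (tensor U1 U2) (tensor V1 V2).
Proof.
  refine {| cf := tens_cf p1 p2 : cA (tensor U1 U2) -> cA (tensor V1 V2);
            cg := tens_cg p1 p2 |}.
  - reflexivity.
  - apply chuarr_ext; simpl.
    + intro a; apply (cg0 p2).
    + intro y; apply (cg0 p1).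
  - intros [[[a1 n1] [a2 n2]]|] h; simpl; [|reflexivity].
    destruct (excluded_middle_informative (cf p1 a1 = cA0 V1)) as [e1|n1'].
    + simpl. rewrite <- (cadj p1), e1. symmetry; apply cr0A.
    + destruct (excluded_middle_informative (cf p2 a2 = cA0 V2)) as [e2|n2'];
        simpl.
      * rewrite <- (cadj p1), e2.
        change (false = cr V1 (cf p1 a1) (cg h (cX0 (chu_dual V2)))).
        rewrite (cg0 h). symmetry; apply cr0X.
      * rewrite <- (cadj p1). reflexivity.
Defined.

(** * The functor F : Cal^0_Sym -> Chu_{2_0} *)

Definition bdec (P : Prop) : bool :=
  if excluded_middle_informative P then true else false.

Lemma bdecP (P : Prop) : bdec P = true <-> P.
Proof.
  unfold bdec; destruct (excluded_middle_informative P); split; congruence || tauto.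
Qed.

Lemma sig_ext (A : Type) (P : A -> Prop) (x y : sig P) :
  proj1_sig x = proj1_sig y -> x = y.
Proof.
  destruct x as [x px], y as [y py]; simpl; intros ->.
  f_equal; apply proof_irrelevance.
Qed.

Definition FObj (L : CLat) : ChuObj.
Proof.
  refine {| cA := {a : L | atom a \/ a = lbot L};
            cA0 := exist _ (lbot L) (or_intror eq_refl);
            cX := {x : L | coatom x \/ x = ltop L};
            cX0 := exist _ (ltop L) (or_intror eq_refl);
            cr := fun a x => negb (bdec (lle (proj1_sig a) (proj1_sig x))) |}.
  - intros x; simpl. assert (H := bdecP (lle (lbot L) (proj1_sig x))).
    rewrite (proj2 H (bot_le _)); reflexivity.
  - intros a; simpl. assert (H := bdecP (lle (proj1_sig a) (ltop L))).
    rewrite (proj2 H (le_top _)); reflexivity.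
Defined.

Lemma FArr_atom (L M : CLat) (f : CalArr L M) (a : {a : L | atom a \/ a = lbot L}) :
  atom (f (proj1_sig a)) \/ f (proj1_sig a) = lbot M.
Proof.
  destruct a as [a [Ha| ->]]; simpl; [apply aatom; exact Ha|right; apply arr_bot].
Qed.

Lemma FArr_coatom (L M : CLat) (f : CalArr L M) (x : {x : M | coatom x \/ x = ltop M}) :
  coatom (radj f (proj1_sig x)) \/ radj f (proj1_sig x) = ltop L.
Proof.
  destruct x as [x [Hx| ->]]; simpl; [apply acoatom; exact Hx|right; apply radj_top].
Qed.

Definition FArr (L M : CLat) (f : CalArr L M) : ChuArr (FObj L) (FObj M).
Proof.
  refine {| cf := fun a : cA (FObj L) => exist _ (f (proj1_sig a)) (FArr_atom f a)
                 : cA (FObj M);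
            cg := fun x : cX (FObj M) =>
                    exist _ (radj f (proj1_sig x)) (FArr_coatom f x) : cX (FObj L) |}.
  - apply sig_ext; simpl; apply arr_bot.
  - apply sig_ext; simpl; apply radj_top.
  - intros a y; simpl. f_equal.
    destruct (excluded_middle_informative (lle (f (proj1_sig a)) (proj1_sig y))) as [H|H].
    + rewrite (proj2 (bdecP _) H).
      symmetry; apply bdecP, arr_galois, H.
    + unfold bdec.
      destruct (excluded_middle_informative (lle (f (proj1_sig a)) (proj1_sig y)));
        [contradiction|].
      destruct (excluded_middle_informative (lle (proj1_sig a) (radj f (proj1_sig y))))
        as [H'|]; [|reflexivity].
      exfalso; apply H, arr_galois, H'.
Defined.

(** * The tensor product L1 (circledast) L2 *)

Definition At (L : CLat) := {p : L | atom p}.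

Definition ClSet (L : CLat) (S : At L -> Prop) :=
  exists a : L, (coatom a \/ a = ltop L) /\
    forall p : At L, S p <-> lle (proj1_sig p) a.

Section Star.
Variables L1 L2 : CLat.

Definition starCo (R : At L1 * At L2 -> Prop) :=
  (exists q, ~ R q) /\
  forall (p1 : At L1) (p2 : At L2),
    ClSet (fun q1 => R (q1, p2)) /\ ClSet (fun q2 => R (p1, q2)).

Definition starGen (R : At L1 * At L2 -> Prop) := starCo R \/ forall q, R q.

Definition starClosed (R : At L1 * At L2 -> Prop) :=
  exists om : (At L1 * At L2 -> Prop) -> Prop,
    (forall S, om S -> starGen S) /\ forall q, R q <-> forall S, om S -> S q.

Definition starCar := {R : At L1 * At L2 -> Prop | starClosed R}.

Definition starLe (x y : starCar) := forall q, proj1_sig x q -> proj1_sig y q.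

Definition starSupSet (F : starCar -> Prop) (q : At L1 * At L2) :=
  forall T, starGen T -> (forall R, F R -> forall q', proj1_sig R q' -> T q') -> T q.

Lemma starSup_closed (F : starCar -> Prop) : starClosed (starSupSet F).
Proof.
  exists (fun T => starGen T /\ (forall R, F R -> forall q', proj1_sig R q' -> T q')).
  split; [intros S [H _]; exact H|].
  intro q; unfold starSupSet; split.
  - intros H S [H1 H2]; exact (H S H1 H2).
  - intros H T H1 H2; exact (H T (conj H1 H2)).
Qed.

Definition starSup (F : starCar -> Prop) : starCar := exist _ _ (starSup_closed F).

Lemma starLe_refl x : starLe x x.
Proof. intros q H; exact H. Qed.

Lemma starLe_trans x y z : starLe x y -> starLe y z -> starLe x z.
Proof. intros H1 H2 q H; auto. Qed.

Lemma starLe_anti x y : starLe x y -> starLe y x -> x = y.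
Proof.
  intros H1 H2; apply sig_ext.
  apply functional_extensionality; intro q.
  apply propositional_extensionality; split; auto.
Qed.

Lemma starSup_ub (F : starCar -> Prop) x : F x -> starLe x (starSup F).
Proof. intros Hx q Hq T _ HT; exact (HT x Hx q Hq). Qed.

Lemma starSup_least (F : starCar -> Prop) y :
  (forall x, F x -> starLe x y) -> starLe (starSup F) y.
Proof.
  intros H q Hq. destruct y as [y [om [Hom Hy]]]; simpl in *.
  apply Hy; intros S HS. apply Hq; [exact (Hom S HS)|].
  intros R HR q' Hq'. specialize (H R HR q' Hq'); simpl in H.
  exact (proj1 (Hy q') H S HS).
Qed.

Definition star : CLat :=
  {| lcar := starCar; lle := starLe;
     lle_refl := starLe_refl; lle_trans := starLe_trans; lle_anti := starLe_anti;
     lsup := starSup; lsup_ub := starSup_ub; lsup_least := starSup_least |}.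

End Star.

(** h is f1 (circledast) f2 : the (join-preserving) arrow sending the atom
    {(p1,p2)} to {(f1 p1, f2 p2)} if both are nonzero, and to 0 otherwise. *)
Definition is_star_arr (L1 L2 M1 M2 : CLat) (f1 : CalArr L1 M1) (f2 : CalArr L2 M2)
  (h : CalArr (star L1 L2) (star M1 M2)) :=
  forall (p1 : At L1) (p2 : At L2) (R : star L1 L2),
    (forall q, proj1_sig R q <-> q = (p1, p2)) ->
    (forall (q1 : At M1) (q2 : At M2),
        proj1_sig q1 = f1 (proj1_sig p1) -> proj1_sig q2 = f2 (proj1_sig p2) ->
        forall q, proj1_sig (h R) q <-> q = (q1, q2)) /\
    (f1 (proj1_sig p1) = lbot M1 \/ f2 (proj1_sig p2) = lbot M2 ->
        h R = lbot (star M1 M2)).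

(* The atoms of L1 ⊛ L2 are exactly the singletons {(p1, p2)}, and its coatoms are exactly
   the relations in Σ'_⊛: these are pairwise incomparable, because in an object of Cal^0_Sym
   two coatoms never cover all atoms.  A coatom C determines the slice maps
   a1 ↦ ⋁{q2 | (a1, q2) ∈ C} and a2 ↦ ⋁{q1 | (q1, a2) ∈ C}, which form a Chu arrow
   F L1 → (F L2)^⊥; conversely such an arrow h gives back the relation {(p1, p2) | p2 ≤ h p1}.
   With (p1, p2) ↦ {(p1, p2)} on points this is the isomorphism α.  Naturality is checked
   atom by atom through the Galois connections f ⊣ f°, and closure under ⊗_C holds because
   ⊗_C is functorial, hence preserves isomorphisms. *)

From Stdlib Require Import Classical ClassicalEpsilon PropExtensionality ProofIrrelevance.
Set Implicit Arguments.
Unset Strict Implicit.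

(** * Atoms and coatoms *)

Lemma atom_neq_bot (L : CLat) (p : L) : atom p -> p <> lbot L.
Proof. intros [H _]; exact H. Qed.

Lemma bot_not_atom (L : CLat) : ~ atom (lbot L).
Proof. intros [H _]; apply H; reflexivity. Qed.

Lemma atom_le_eq (L : CLat) (p q : L) : atom p -> atom q -> lle q p -> q = p.
Proof.
  intros [_ Hp] Hq Hqp. destruct (Hp q Hqp) as [E|E]; [|exact E].
  exfalso; exact (atom_neq_bot Hq E).
Qed.

Lemma coatom_le_eq (L : CLat) (x y : L) : coatom x -> lle x y -> y <> ltop L -> y = x.
Proof. intros [_ Hx] Hxy Hy. destruct (Hx y Hxy); [assumption|contradiction]. Qed.

Section Atomistic.
Variables (L : CLat) (Hat : atomistic L).

Lemma le_by_atoms (a b : L) : (forall p, atom p -> lle p a -> lle p b) -> lle a b.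
Proof.
  intro H. apply lle_trans with (lsup (SigAt a)).
  - rewrite <- (Hat a); apply lle_refl.
  - apply lsup_least. intros p [Hp Hpa]; exact (H p Hp Hpa).
Qed.

Lemma eq_by_atoms (x y : L) : (forall p, atom p -> (lle p x <-> lle p y)) -> x = y.
Proof. intro H. apply lle_anti; apply le_by_atoms; intros p Hp; apply H; auto. Qed.

Lemma lsup_atoms_eq (S : L -> Prop) (a : L) :
  (forall p, atom p -> (S p <-> lle p a)) -> lsup (fun q => atom q /\ S q) = a.
Proof.
  intro H. apply lle_anti.
  - apply lsup_least. intros q [Hq Sq]. apply (H q Hq); exact Sq.
  - apply le_by_atoms. intros p Hp Hpa. apply lsup_ub.
    split; [exact Hp|]. apply (H p Hp); exact Hpa.
Qed.

Lemma exists_atom_not_below_coatom (x : L) : coatom x -> exists p, atom p /\ ~ lle p x.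
Proof.
  intros Hx. apply NNPP; intro Hn. apply (proj1 Hx), lle_anti; [apply le_top|].
  apply le_by_atoms. intros p Hp _.
  apply NNPP; intro Hpx. apply Hn. exists p; auto.
Qed.

Lemma atomless_trivial : (forall p : L, ~ atom p) -> forall x y : L, x = y.
Proof. intros N x y. apply eq_by_atoms. intros p Hp; elim (N p Hp). Qed.

End Atomistic.

Section Coatomistic.
Variables (L : CLat) (Hco : coatomistic L).

Lemma coatom_separates (p q : L) :
  atom p -> atom q -> p <> q -> exists x, coatom x /\ lle p x /\ ~ lle q x.
Proof.
  intros Hp Hq Hne. apply NNPP; intro Hn.
  apply Hne, eq_sym, (atom_le_eq Hp Hq). rewrite (Hco p). apply lsup_ub.
  intros x [Hx Hpx]. apply NNPP; intro Hqx. apply Hn. exists x; auto.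
Qed.

Lemma exists_coatom_not_above_atom (p : L) : atom p -> exists x, coatom x /\ ~ lle p x.
Proof.
  intros Hp. apply NNPP; intro Hn. apply (atom_neq_bot Hp), lle_anti; [|apply bot_le].
  rewrite (Hco (lbot L)). apply lsup_ub. intros x [Hx _].
  apply NNPP; intro Hpx. apply Hn. exists x; auto.
Qed.

End Coatomistic.

Section CalObjFacts.
Variable L : CalObj.

Lemma cal_atomistic : atomistic L.
Proof. exact (proj1 (cobj_ax L)). Qed.

Lemma cal_coatomistic : coatomistic L.
Proof. exact (proj1 (proj2 (cobj_ax L))). Qed.

Lemma two_coatoms_miss (a b : L) :
  coatom a -> coatom b -> exists p, atom p /\ ~ lle p a /\ ~ lle p b.
Proof.
  intros Ha Hb. apply NNPP; intro N.
  apply (proj1 (proj2 (proj2 (cobj_ax L))) a b Ha Hb). intro p; split.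
  - intro Hp. destruct (classic (lle p a)) as [A|A]; [left; split; auto|].
    destruct (classic (lle p b)) as [B|B]; [right; split; auto|].
    elim N; eauto.
  - intros [[A _]|[A _]]; exact A.
Qed.

Lemma two_atoms_miss (p q : L) :
  atom p -> atom q -> exists x, coatom x /\ ~ lle p x /\ ~ lle q x.
Proof.
  intros Hp Hq. apply NNPP; intro N.
  apply (proj2 (proj2 (proj2 (cobj_ax L))) p q Hp Hq). intro x; split.
  - intro Hx. destruct (classic (lle p x)) as [A|A]; [left; split; auto|].
    destruct (classic (lle q x)) as [B|B]; [right; split; auto|].
    elim N; eauto.
  - intros [[A _]|[A _]]; exact A.
Qed.

End CalObjFacts.

Arguments cal_atomistic : clear implicits.
Arguments cal_coatomistic : clear implicits.

Lemma ClSet_coatom (L : CLat) (S : At L -> Prop) (q : At L) :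
  ClSet S -> ~ S q -> exists a, coatom a /\ forall p, S p <-> lle (proj1_sig p) a.
Proof.
  intros [a [[Ha| ->] Ea]] Nq; [exists a; auto|].
  elim Nq; apply Ea, le_top.
Qed.

Lemma ClSet_full (L : CLat) (Hat : atomistic L) (S T : At L -> Prop) (q : At L) :
  ClSet S -> ClSet T -> (forall p, S p -> T p) -> T q -> ~ S q -> forall p, T p.
Proof.
  intros HS [b [_ Eb]] Sub Tq Sq.
  destruct (ClSet_coatom HS Sq) as [a [Ha Ea]].
  assert (Lab : lle a b).
  { apply (le_by_atoms Hat). intros p Hp Hpa.
    apply (Eb (exist _ p Hp)), Sub, (Ea (exist _ p Hp)), Hpa. }
  destruct (classic (b = ltop L)) as [Eb_top|Nb].
  - intro p; apply Eb; rewrite Eb_top; apply le_top.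
  - rewrite (coatom_le_eq Ha Lab Nb) in Eb. elim Sq; apply Ea, Eb, Tq.
Qed.

Lemma arr_eq_eq (U V : ChuObj) (u v : ChuArr U V) : arr_eq u v -> u = v.
Proof. intros [A B]; apply chuarr_ext; auto. Qed.

Lemma chu_is_iso_bij (U V : ChuObj) (u : ChuArr U V) :
  (forall b, exists a, cf u a = b) -> (forall a a', cf u a = cf u a' -> a = a') ->
  (forall x, exists y, cg u y = x) -> (forall y y', cg u y = cg u y' -> y = y') ->
  chu_is_iso u.
Proof.
  intros Hfs Hfi Hgs Hgi.
  destruct (choice _ Hfs) as [fi Efi]. destruct (choice _ Hgs) as [gi Egi].
  assert (fi0 : fi (cA0 V) = cA0 U) by (apply Hfi; rewrite Efi; symmetry; apply cf0).
  assert (gi0 : gi (cX0 U) = cX0 V) by (apply Hgi; rewrite Egi; symmetry; apply cg0).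
  assert (adj : forall b y, cr U (fi b) y = cr V b (gi y)).
  { intros b y. rewrite <- (Efi b) at 2. rewrite (cadj u), Egi. reflexivity. }
  exists {| cf := fi; cg := gi; cf0 := fi0; cg0 := gi0; cadj := adj |}.
  split; split; simpl; intros; auto.
Qed.

Lemma chu_is_iso_comp (U V W : ChuObj) (u : ChuArr U V) (v : ChuArr V W) :
  chu_is_iso u -> chu_is_iso v -> chu_is_iso (chu_comp v u).
Proof.
  intros [u' [[A1 A2] [B1 B2]]] [v' [[C1 C2] [D1 D2]]].
  exists (chu_comp u' v'). simpl in *. split; split; simpl; intros.
  - rewrite C1. apply A1.
  - rewrite C2. apply A2.
  - rewrite B1. apply D1.
  - rewrite B2. apply D2.
Qed.

Lemma tensor_arr_comp (U1 U2 V1 V2 W1 W2 : ChuObj) (u : ChuArr U1 V1) (u' : ChuArr V1 W1)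
  (v : ChuArr U2 V2) (v' : ChuArr V2 W2) :
  tensor_arr (chu_comp u' u) (chu_comp v' v) = chu_comp (tensor_arr u' v') (tensor_arr u v).
Proof.
  apply chuarr_ext; [|intro; apply chuarr_ext; reflexivity].
  intros [[[a1 n1] [a2 n2]]|]; [|reflexivity].
  assert (F1 := cf0 u'). assert (F2 := cf0 v').
  simpl; unfold tens_cf; simpl.
  repeat match goal with |- context [excluded_middle_informative ?P] =>
    destruct (excluded_middle_informative P) end; simpl;
  try reflexivity; try (exfalso; simpl in *; congruence).
  f_equal; f_equal; apply sig_ext; reflexivity.
Qed.

Lemma tensor_arr_id (U1 U2 : ChuObj) :
  tensor_arr (chu_id U1) (chu_id U2) = chu_id (tensor U1 U2).
Proof.
  apply chuarr_ext; [|intro; apply chuarr_ext; reflexivity].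
  intros [[[a1 n1] [a2 n2]]|]; [|reflexivity].
  simpl; unfold tens_cf; simpl.
  repeat match goal with |- context [excluded_middle_informative ?P] =>
    destruct (excluded_middle_informative P) end; simpl; try (exfalso; simpl in *; congruence).
  f_equal; f_equal; apply sig_ext; reflexivity.
Qed.

Lemma tensor_arr_iso (U1 U2 V1 V2 : ChuObj) (u : ChuArr U1 V1) (v : ChuArr U2 V2) :
  chu_is_iso u -> chu_is_iso v -> chu_is_iso (tensor_arr u v).
Proof.
  intros [u' [A B]] [v' [C D]].
  apply arr_eq_eq in A, B, C, D.
  exists (tensor_arr u' v').
  rewrite <- !tensor_arr_comp, A, B, C, D, !tensor_arr_id.
  split; split; reflexivity.
Qed.

(** * The lattice L1 ⊛ L2 *)

Section StarGeneral.
Variables L1 L2 : CLat.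

Lemma star_ext (C D : star L1 L2) :
  (forall q, proj1_sig C q <-> proj1_sig D q) -> C = D.
Proof. intro H. apply (starLe_anti (L1:=L1) (L2:=L2)); intros q Hq; apply H, Hq. Qed.

Lemma starGen_closed (S : At L1 * At L2 -> Prop) : starGen S -> starClosed S.
Proof.
  intro H. exists (fun T => T = S). split.
  - intros T ->; exact H.
  - intro q; split; [intros Hq T ->; exact Hq|intro Hq; apply Hq; reflexivity].
Qed.

Definition star_of_gen (S : At L1 * At L2 -> Prop) (HS : starGen S) : star L1 L2 :=
  exist _ S (starGen_closed HS).

Lemma star_top_mem q : proj1_sig (ltop (star L1 L2)) q.
Proof.
  intros T _ HT.
  assert (Hall : starGen (fun _ : At L1 * At L2 => True)) by (right; auto).
  exact (HT (star_of_gen Hall) I q I).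
Qed.

Lemma star_eq_top (C : star L1 L2) : (forall q, proj1_sig C q) -> C = ltop (star L1 L2).
Proof. intro H; apply star_ext; intro q; split; intro; [apply star_top_mem|apply H]. Qed.

Lemma star_neq_top (C : star L1 L2) : C <> ltop (star L1 L2) -> exists q, ~ proj1_sig C q.
Proof.
  intro N. apply NNPP; intro A. apply N, star_eq_top. intro q.
  apply NNPP; intro B. apply A; eauto.
Qed.

Lemma star_separate (C : star L1 L2) q :
  ~ proj1_sig C q -> exists S, starCo S /\ (forall q', proj1_sig C q' -> S q') /\ ~ S q.
Proof.
  destruct C as [R [om [Hom HR]]]; simpl. intro Nq.
  assert (N : ~ forall S, om S -> S q) by (intro A; apply Nq, HR, A).
  apply not_all_ex_not in N. destruct N as [S N].
  apply imply_to_and in N. destruct N as [HS NS].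
  exists S. destruct (Hom S HS) as [H|H]; [|elim NS; apply H].
  split; [exact H|]. split; [|exact NS]. intros q' Hq'. apply HR; auto.
Qed.

Lemma starGen_ClSet (S : At L1 * At L2 -> Prop) : starGen S ->
  forall p1 p2, ClSet (fun q1 => S (q1, p2)) /\ ClSet (fun q2 => S (p1, q2)).
Proof.
  intros [H|H] p1 p2; [exact (proj2 H p1 p2)|].
  split; [exists (ltop L1)|exists (ltop L2)]; (split; [right; reflexivity|]);
    intro; split; intro; auto; apply le_top.
Qed.

End StarGeneral.

Definition star_cross (L1 L2 : CLat) (x1 : L1) (x2 : L2) (q : At L1 * At L2) : Prop :=
  lle (proj1_sig (fst q)) x1 \/ lle (proj1_sig (snd q)) x2.

Lemma star_cross_starCo (L1 L2 : CLat) (Hat1 : atomistic L1) (Hat2 : atomistic L2)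
  (x1 : L1) (x2 : L2) : coatom x1 -> coatom x2 -> starCo (star_cross x1 x2).
Proof.
  intros Hx1 Hx2. split.
  - destruct (exists_atom_not_below_coatom Hat1 Hx1) as [p1 [Hp1 N1]].
    destruct (exists_atom_not_below_coatom Hat2 Hx2) as [p2 [Hp2 N2]].
    exists (exist _ p1 Hp1, exist _ p2 Hp2). intros [H|H]; auto.
  - intros p1 p2. unfold star_cross; simpl. split.
    + destruct (classic (lle (proj1_sig p2) x2)) as [H|H].
      * exists (ltop L1); split; [right; reflexivity|].
        intro q; split; intro; [apply le_top|right; exact H].
      * exists x1; split; [left; exact Hx1|]. intro q; tauto.
    + destruct (classic (lle (proj1_sig p1) x1)) as [H|H].
      * exists (ltop L2); split; [right; reflexivity|].
        intro q; split; intro; [apply le_top|left; exact H].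
      * exists x2; split; [left; exact Hx2|]. intro q; tauto.
Qed.

Section StarCal.
Variables L1 L2 : CalObj.

Lemma star_cross_gen (x1 : L1) (x2 : L2) :
  coatom x1 -> coatom x2 -> starGen (star_cross x1 x2).
Proof.
  intros H1 H2. left. exact (star_cross_starCo (cal_atomistic L1) (cal_atomistic L2) H1 H2).
Qed.

(* Every pair of atoms is avoided by some cross. *)
Lemma star_bot_nmem q : ~ proj1_sig (lbot (star L1 L2)) q.
Proof.
  intro H. destruct q as [[p1 Hp1] [p2 Hp2]].
  destruct (exists_coatom_not_above_atom (cal_coatomistic L1) Hp1) as [x1 [Hx1 N1]].
  destruct (exists_coatom_not_above_atom (cal_coatomistic L2) Hp2) as [x2 [Hx2 N2]].
  destruct (H _ (star_cross_gen Hx1 Hx2) (fun _ F => match F with end)) as [A|A];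
    auto.
Qed.

Lemma star_eq_bot (C : star L1 L2) : (forall q, ~ proj1_sig C q) -> C = lbot (star L1 L2).
Proof.
  intro H; apply star_ext; intro q; split; intro A; [elim (H q A)|elim (star_bot_nmem A)].
Qed.

Lemma star_sing_closed (p1 : At L1) (p2 : At L2) : starClosed (fun q => q = (p1, p2)).
Proof.
  exists (fun T => starGen T /\ T (p1, p2)). split; [intros S [H _]; exact H|].
  intro q; split; [intros -> S [_ H]; exact H|].
  intro H. apply NNPP; intro Hne.
  destruct q as [q1 q2], p1 as [p1 Hp1], p2 as [p2 Hp2].
  destruct (classic (q1 = exist _ p1 Hp1)) as [->|N1].
  - assert (N2 : p2 <> proj1_sig q2) by (intro E; apply Hne; f_equal; apply sig_ext; simpl; auto).
    destruct (coatom_separates (cal_coatomistic L2) Hp2 (proj2_sig q2) N2)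
      as [x2 [Hx2 [A2 B2]]].
    destruct (exists_coatom_not_above_atom (cal_coatomistic L1) Hp1) as [x1 [Hx1 B1]].
    destruct (H _ (conj (star_cross_gen Hx1 Hx2) (or_intror A2))); auto.
  - assert (N1' : p1 <> proj1_sig q1) by (intro E; apply N1, sig_ext; auto).
    destruct (coatom_separates (cal_coatomistic L1) Hp1 (proj2_sig q1) N1')
      as [x1 [Hx1 [A1 B1]]].
    destruct (exists_coatom_not_above_atom (cal_coatomistic L2) (proj2_sig q2)) as [x2 [Hx2 B2]].
    destruct (H _ (conj (star_cross_gen Hx1 Hx2) (or_introl A1))); auto.
Qed.

Definition star_sing (p1 : At L1) (p2 : At L2) : star L1 L2 :=
  exist _ _ (star_sing_closed p1 p2).

Lemma star_sing_le p1 p2 (C : star L1 L2) : lle (star_sing p1 p2) C <-> proj1_sig C (p1, p2).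
Proof. split; [intro H; apply H; reflexivity|intros H q ->; exact H]. Qed.

Lemma star_sing_atom (p1 : At L1) (p2 : At L2) : atom (star_sing p1 p2).
Proof.
  split.
  - intro E. apply (@star_bot_nmem (p1, p2)). rewrite <- E. reflexivity.
  - intros C HC. destruct (classic (exists q, proj1_sig C q)) as [[q Hq]|N].
    + right. apply star_ext; intro q'; split; [apply HC|].
      intros ->. assert (E := HC q Hq). simpl in E; subst; exact Hq.
    + left. apply star_eq_bot. intros q Hq; apply N; eauto.
Qed.

Lemma star_atomE (C : star L1 L2) : atom C -> exists p1 p2, C = star_sing p1 p2.
Proof.
  intro HC. destruct (classic (exists q, proj1_sig C q)) as [[[p1 p2] Hq]|N].
  - exists p1, p2. symmetry. apply (atom_le_eq HC (star_sing_atom p1 p2)).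
    apply star_sing_le, Hq.
  - exfalso. apply (atom_neq_bot HC), star_eq_bot. intros q Hq; apply N; eauto.
Qed.

Lemma star_sing_inj (p1 q1 : At L1) (p2 q2 : At L2) :
  star_sing p1 p2 = star_sing q1 q2 -> p1 = q1 /\ p2 = q2.
Proof.
  intro E. assert (H : proj1_sig (star_sing p1 p2) (p1, p2)) by reflexivity.
  rewrite E in H. simpl in H. injection H; auto.
Qed.

Lemma starCo_maximal (R T : At L1 * At L2 -> Prop) :
  starCo R -> starCo T -> (forall q, R q -> T q) -> forall q, T q -> R q.
Proof.
  intros HR HT Sub [q1 q2] Tq. apply NNPP; intro Rq.
  assert (Tcol : forall p, ~ R (q1, p) -> forall s, T (s, p)).
  { intros p Np.
    refine (ClSet_full (cal_atomistic L1) (proj1 (proj2 HR q1 p)) (proj1 (proj2 HT q1 p))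
              (fun s => Sub (s, p)) (q := q1) _ Np).
    exact (ClSet_full (cal_atomistic L2) (proj2 (proj2 HR q1 q2)) (proj2 (proj2 HT q1 q2))
             (fun s => Sub (q1, s)) Tq Rq p). }
  destruct (proj1 HT) as [[a1 a2] Na].
  destruct (ClSet_coatom (proj2 (proj2 HR q1 q2)) Rq) as [x [Hx Ex]].
  assert (Na' : ~ T (a1, a2)) by exact Na.
  destruct (ClSet_coatom (proj2 (proj2 HT a1 a2)) Na') as [w [Hw Ew]].
  destruct (two_coatoms_miss Hx Hw) as [p [Hp [Npx Npw]]].
  apply Npw, (Ew (exist _ p Hp)), Tcol.
  intro A; apply Npx, (Ex (exist _ p Hp)), A.
Qed.

Lemma starCo_coatom (C : star L1 L2) : starCo (proj1_sig C) -> coatom C.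
Proof.
  intros HC. split.
  - intro E. destruct (proj1 HC) as [q Nq]. apply Nq. rewrite E. apply star_top_mem.
  - intros D HD. destruct (classic (D = ltop (star L1 L2))) as [E|E]; [right; exact E|left].
    destruct (star_neq_top E) as [q Nq]. destruct (star_separate Nq) as [T [HT [Sub _]]].
    assert (Max := starCo_maximal HC HT (fun q A => Sub q (HD q A))).
    apply star_ext; intro q'; split; [|apply HD].
    intro A. apply Max, Sub, A.
Qed.

Lemma coatom_starCo (C : star L1 L2) : coatom C -> starCo (proj1_sig C).
Proof.
  intro HC.
  destruct (star_neq_top (proj1 HC)) as [q Nq].
  destruct (star_separate Nq) as [S [HS [Sub NS]]].
  destruct (proj2 HC (star_of_gen (or_introl HS)) Sub) as [A|A].
  - rewrite <- A. exact HS.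
  - elim NS. change (proj1_sig (star_of_gen (or_introl HS)) q). rewrite A. apply star_top_mem.
Qed.

Lemma coatom_or_top_starGen (C : star L1 L2) :
  coatom C \/ C = ltop (star L1 L2) -> starGen (proj1_sig C).
Proof.
  intros [H| ->]; [left; apply coatom_starCo, H|right; apply star_top_mem].
Qed.

Lemma star_atomistic : atomistic (star L1 L2).
Proof.
  intro C. apply lle_anti.
  - intros [p1 p2] Hq.
    apply (proj1 (star_sing_le p1 p2 (lsup (SigAt C)))), lsup_ub.
    split; [apply star_sing_atom|apply star_sing_le, Hq].
  - apply lsup_least. intros x [_ A]; exact A.
Qed.

Lemma star_coatomistic : coatomistic (star L1 L2).
Proof.
  intro C. apply lle_anti.
  - apply lsup_ub. intros x [_ A]; exact A.
  - intros q Hq. apply NNPP; intro Nq.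
    destruct (star_separate Nq) as [S [HS [Sub NS]]].
    assert (Le : lle (linf (SigCo C)) (star_of_gen (or_introl HS))).
    { apply lsup_least. intros y Hy. apply Hy. split; [apply starCo_coatom, HS|exact Sub]. }
    apply NS, Le, Hq.
Qed.

Lemma star_coatoms_miss (x y : star L1 L2) : coatom x -> coatom y ->
  ~ (forall p, atom p <-> SigAt x p \/ SigAt y p).
Proof.
  intros Hx Hy H.
  assert (Cover : forall q, proj1_sig x q \/ proj1_sig y q).
  { intros [p1 p2]. destruct (proj1 (H (star_sing p1 p2)) (star_sing_atom p1 p2))
      as [[_ A]|[_ A]]; [left|right]; apply star_sing_le, A. }
  assert (HR := coatom_starCo Hx). assert (HT := coatom_starCo Hy).
  destruct (proj1 HR) as [[a1 a2] Na]. destruct (proj1 HT) as [[b1 b2] Nb].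
  destruct (ClSet_coatom (proj1 (proj2 HR a1 a2)) Na) as [u [Hu Eu]].
  destruct (ClSet_coatom (proj1 (proj2 HT b1 b2)) Nb) as [v [Hv Ev]].
  destruct (two_coatoms_miss Hu Hv) as [q1 [Hq1 [Nu Nv]]].
  set (q1' := exist _ q1 Hq1 : At L1).
  assert (NR : ~ proj1_sig x (q1', a2)) by (intro A; apply Nu, (Eu q1'), A).
  assert (NT : ~ proj1_sig y (q1', b2)) by (intro A; apply Nv, (Ev q1'), A).
  destruct (ClSet_coatom (proj2 (proj2 HR q1' a2)) NR) as [u' [Hu' Eu']].
  destruct (ClSet_coatom (proj2 (proj2 HT q1' b2)) NT) as [v' [Hv' Ev']].
  destruct (two_coatoms_miss Hu' Hv') as [q2 [Hq2 [Nu' Nv']]].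
  destruct (Cover (q1', exist _ q2 Hq2)) as [A|A].
  - apply Nu', (Eu' (exist _ q2 Hq2)), A.
  - apply Nv', (Ev' (exist _ q2 Hq2)), A.
Qed.

Lemma star_atoms_miss (p q : star L1 L2) : atom p -> atom q ->
  ~ (forall x, coatom x <-> SigCo p x \/ SigCo q x).
Proof.
  intros Hp Hq H.
  destruct (star_atomE Hp) as [p1 [p2 ->]].
  destruct (star_atomE Hq) as [q1 [q2 ->]].
  destruct (two_atoms_miss (proj2_sig p1) (proj2_sig q1)) as [x1 [Hx1 [A1 B1]]].
  destruct (two_atoms_miss (proj2_sig p2) (proj2_sig q2)) as [x2 [Hx2 [A2 B2]]].
  set (E := star_of_gen (star_cross_gen Hx1 Hx2)).
  assert (CE : coatom E)
    by (apply starCo_coatom, star_cross_starCo; auto using cal_atomistic).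
  destruct (proj1 (H E) CE) as [[_ A]|[_ A]].
  - destruct (proj1 (star_sing_le _ _ _) A); auto.
  - destruct (proj1 (star_sing_le _ _ _) A); auto.
Qed.

Lemma star_cal_obj : cal_obj (star L1 L2).
Proof.
  split; [apply star_atomistic|]. split; [apply star_coatomistic|].
  split; [apply star_coatoms_miss|apply star_atoms_miss].
Qed.

Definition star_obj : CalObj := {| cobj := star L1 L2; cobj_ax := star_cal_obj |}.

End StarCal.

(** * The isomorphism α *)

(* For [a1] not an atom the defining condition is vacuous, so the slice is the top:
   this is how [alpha] sends the base point [0] of [F L1] to the base point [1]. *)
Definition slice2 (L1 L2 : CLat) (C : star L1 L2) (a1 : L1) : L2 :=
  lsup (fun q2 => atom q2 /\ forall (H1 : atom a1) (H2 : atom q2),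
                    proj1_sig C (exist _ a1 H1, exist _ q2 H2)).

Definition slice1 (L1 L2 : CLat) (C : star L1 L2) (a2 : L2) : L1 :=
  lsup (fun q1 => atom q1 /\ forall (H1 : atom q1) (H2 : atom a2),
                    proj1_sig C (exist _ q1 H1, exist _ a2 H2)).

Lemma atom_pair_irrel (L1 L2 : CLat) (P : At L1 * At L2 -> Prop) (a1 : L1) (a2 : L2) H1 H2 :
  (forall (H1' : atom a1) (H2' : atom a2), P (exist _ a1 H1', exist _ a2 H2')) <->
  P (exist _ a1 H1, exist _ a2 H2).
Proof.
  split; [intro H; apply H|intros H H1' H2'].
  rewrite (proof_irrelevance _ H1' H1), (proof_irrelevance _ H2' H2); exact H.
Qed.

Section Slices.
Variables L1 L2 : CalObj.
Implicit Type C : star L1 L2.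

Lemma slice2_bot C : slice2 C (lbot L1) = ltop L2.
Proof.
  apply (lsup_atoms_eq (cal_atomistic L2)). intros p Hp; split; [intro; apply le_top|].
  intros _ H1; elim (bot_not_atom H1).
Qed.

Lemma slice1_bot C : slice1 C (lbot L2) = ltop L1.
Proof.
  apply (lsup_atoms_eq (cal_atomistic L1)). intros p Hp; split; [intro; apply le_top|].
  intros _ ? H2; elim (bot_not_atom H2).
Qed.

Lemma slice2_top (a : L1) : slice2 (ltop (star L1 L2)) a = ltop L2.
Proof.
  apply (lsup_atoms_eq (cal_atomistic L2)). intros p Hp.
  split; intro; [apply le_top|intros; apply star_top_mem].
Qed.

Lemma slice1_top (a : L2) : slice1 (ltop (star L1 L2)) a = ltop L1.
Proof.
  apply (lsup_atoms_eq (cal_atomistic L1)). intros p Hp.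
  split; intro; [apply le_top|intros; apply star_top_mem].
Qed.

Lemma slice2_spec C (HC : coatom C \/ C = ltop (star L1 L2)) (a1 : L1) (Ha : atom a1) :
  (coatom (slice2 C a1) \/ slice2 C a1 = ltop L2) /\
  forall q2 (Hq : atom q2), lle q2 (slice2 C a1) <-> proj1_sig C (exist _ a1 Ha, exist _ q2 Hq).
Proof.
  destruct (classic (exists q : L2, atom q)) as [[q Hq]|N].
  - destruct (proj2 (starGen_ClSet (coatom_or_top_starGen HC) (exist _ a1 Ha) (exist _ q Hq)))
      as [b [Hb Eb]].
    assert (E : slice2 C a1 = b).
    { apply (lsup_atoms_eq (cal_atomistic L2)). intros p Hp.
      rewrite (atom_pair_irrel (proj1_sig C) Ha Hp). exact (Eb (exist _ p Hp)). }
    rewrite E. split; [exact Hb|]. intros q2 Hq2. symmetry; exact (Eb (exist _ q2 Hq2)).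
  - split; [right; apply (atomless_trivial (cal_atomistic L2)); intros p Hp; apply N; eauto|].
    intros q2 Hq2; elim N; eauto.
Qed.

Lemma slice1_spec C (HC : coatom C \/ C = ltop (star L1 L2)) (a2 : L2) (Ha : atom a2) :
  (coatom (slice1 C a2) \/ slice1 C a2 = ltop L1) /\
  forall q1 (Hq : atom q1), lle q1 (slice1 C a2) <-> proj1_sig C (exist _ q1 Hq, exist _ a2 Ha).
Proof.
  destruct (classic (exists q : L1, atom q)) as [[q Hq]|N].
  - destruct (proj1 (starGen_ClSet (coatom_or_top_starGen HC) (exist _ q Hq) (exist _ a2 Ha)))
      as [b [Hb Eb]].
    assert (E : slice1 C a2 = b).
    { apply (lsup_atoms_eq (cal_atomistic L1)). intros p Hp.
      rewrite (atom_pair_irrel (proj1_sig C) Hp Ha). exact (Eb (exist _ p Hp)). }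
    rewrite E. split; [exact Hb|]. intros q1 Hq1. symmetry; exact (Eb (exist _ q1 Hq1)).
  - split; [right; apply (atomless_trivial (cal_atomistic L1)); intros p Hp; apply N; eauto|].
    intros q1 Hq1; elim N; eauto.
Qed.

Lemma slice2_coatom (C : cX (FObj (star L1 L2))) (a : cA (FObj L1)) :
  coatom (slice2 (proj1_sig C) (proj1_sig a)) \/
  slice2 (proj1_sig C) (proj1_sig a) = ltop L2.
Proof.
  destruct a as [a [Ha| ->]]; simpl.
  - exact (proj1 (slice2_spec (proj2_sig C) Ha)).
  - right; apply slice2_bot.
Qed.

Lemma slice1_coatom (C : cX (FObj (star L1 L2))) (a : cA (FObj L2)) :
  coatom (slice1 (proj1_sig C) (proj1_sig a)) \/
  slice1 (proj1_sig C) (proj1_sig a) = ltop L1.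
Proof.
  destruct a as [a [Ha| ->]]; simpl.
  - exact (proj1 (slice1_spec (proj2_sig C) Ha)).
  - right; apply slice1_bot.
Qed.

Lemma slice_galois (C : cX (FObj (star L1 L2))) (a : cA (FObj L1)) (b : cA (FObj L2)) :
  lle (proj1_sig b) (slice2 (proj1_sig C) (proj1_sig a)) <->
  lle (proj1_sig a) (slice1 (proj1_sig C) (proj1_sig b)).
Proof.
  destruct a as [a [Ha| ->]], b as [b [Hb| ->]]; simpl;
    rewrite ?slice2_bot, ?slice1_bot; try (split; intro; first [apply le_top|apply bot_le]).
  rewrite (proj2 (slice2_spec (proj2_sig C) Ha) b Hb), (proj2 (slice1_spec (proj2_sig C) Hb) a Ha).
  tauto.
Qed.

End Slices.

Lemma bdec_iff (P Q : Prop) : (P <-> Q) -> bdec P = bdec Q.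
Proof. intro H. f_equal. apply propositional_extensionality, H. Qed.

Lemma negb_bdec_inj (P Q : Prop) : negb (bdec P) = negb (bdec Q) -> (P <-> Q).
Proof.
  unfold bdec. destruct (excluded_middle_informative P), (excluded_middle_informative Q);
    simpl; intro E; try discriminate; tauto.
Qed.

Lemma FObj_nonzero_atom (L : CLat) (a : cA (FObj L)) : a <> cA0 (FObj L) -> atom (proj1_sig a).
Proof. destruct a as [a [Ha|Ha]]; intro N; [exact Ha|]. elim N. apply sig_ext, Ha. Qed.

Lemma FObj_atom_nonzero (L : CLat) (p : L) (Hp : atom p) :
  (exist _ p (or_introl Hp) : cA (FObj L)) <> cA0 (FObj L).
Proof. intro E. apply (f_equal (@proj1_sig _ _)) in E. exact (atom_neq_bot Hp E). Qed.

Arguments FObj_atom_nonzero [L p] Hp.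

Definition FAt (L : CLat) (p : At L) : cA (FObj L) :=
  exist _ (proj1_sig p) (or_introl (proj2_sig p)).

Lemma FObj_dual_galois (L1 L2 : CLat) (h : ChuArr (FObj L1) (chu_dual (FObj L2))) a b :
  lle (proj1_sig b) (proj1_sig (cf h a)) <-> lle (proj1_sig a) (proj1_sig (cg h b)).
Proof. apply negb_bdec_inj. exact (cadj h a b). Qed.

(* The preimage of [h] under [alpha]. *)
Definition chu_rel (L1 L2 : CLat) (h : ChuArr (FObj L1) (chu_dual (FObj L2)))
  (q : At L1 * At L2) : Prop :=
  lle (proj1_sig (snd q)) (proj1_sig (cf h (FAt (fst q)))).

Lemma chu_rel_starGen (L1 L2 : CLat) (h : ChuArr (FObj L1) (chu_dual (FObj L2))) :
  starGen (chu_rel h).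
Proof.
  destruct (classic (forall q, chu_rel h q)) as [A|A]; [right; exact A|left].
  split; [apply not_all_ex_not, A|].
  intros p1 p2. split.
  - exists (proj1_sig (cg h (FAt p2))). split; [apply proj2_sig|].
    intro q1. exact (FObj_dual_galois h (FAt q1) (FAt p2)).
  - exists (proj1_sig (cf h (FAt p1))). split; [apply proj2_sig|]. reflexivity.
Qed.

Section Alpha.
Variables L1 L2 : CalObj.

Definition alpha_dual (C : cX (FObj (star L1 L2))) : ChuArr (FObj L1) (chu_dual (FObj L2)).
Proof.
  refine {| cf := fun a : cA (FObj L1) =>
              exist _ (slice2 (proj1_sig C) (proj1_sig a)) (slice2_coatom C a)
              : cA (chu_dual (FObj L2));
            cg := fun b : cX (chu_dual (FObj L2)) =>
              exist _ (slice1 (proj1_sig C) (proj1_sig b)) (slice1_coatom C b) : cX (FObj L1) |}.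
  - apply sig_ext, slice2_bot.
  - apply sig_ext, slice1_bot.
  - intros a b; simpl. f_equal. apply bdec_iff, slice_galois.
Defined.

Definition alpha_pair (a : cA (tensor (FObj L1) (FObj L2))) : cA (FObj (star L1 L2)) :=
  match a with
  | None => cA0 (FObj (star L1 L2))
  | Some (a1, a2) =>
      exist _ (star_sing (exist _ _ (FObj_nonzero_atom (proj2_sig a1)))
                         (exist _ _ (FObj_nonzero_atom (proj2_sig a2))))
              (or_introl (star_sing_atom _ _))
  end.

Definition alpha : ChuArr (tensor (FObj L1) (FObj L2)) (FObj (star L1 L2)).
Proof.
  refine {| cf := alpha_pair; cg := alpha_dual |}.
  - reflexivity.
  - apply chuarr_ext; intro; apply sig_ext; simpl; [apply slice2_top|apply slice1_top].
  - intros [[a1 a2]|] C.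
    + simpl. f_equal. apply bdec_iff. etransitivity; [apply star_sing_le|].
      symmetry; apply (proj2 (slice1_spec (proj2_sig C) (FObj_nonzero_atom (proj2_sig a2)))).
    + exact (cr0A (FObj (star L1 L2)) C).
Defined.

Lemma alpha_pair_surj (b : cA (FObj (star L1 L2))) : exists a, alpha_pair a = b.
Proof.
  destruct b as [C [HC|HC]].
  - destruct (star_atomE HC) as [[p1 Hp1] [[p2 Hp2] E]].
    exists (Some (exist _ (exist _ p1 (or_introl Hp1)) (FObj_atom_nonzero Hp1),
                  exist _ (exist _ p2 (or_introl Hp2)) (FObj_atom_nonzero Hp2))).
    apply sig_ext; simpl. rewrite E. f_equal; apply sig_ext; reflexivity.
  - exists None. apply sig_ext, eq_sym, HC.
Qed.

Lemma alpha_pair_inj (a a' : cA (tensor (FObj L1) (FObj L2))) :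
  alpha_pair a = alpha_pair a' -> a = a'.
Proof.
  destruct a as [[a1 a2]|], a' as [[b1 b2]|]; intro E; try reflexivity;
    apply (f_equal (@proj1_sig _ _)) in E; simpl in E.
  - destruct (star_sing_inj E) as [E1 E2].
    apply (f_equal (@proj1_sig _ _)) in E1, E2. simpl in E1, E2.
    f_equal; f_equal; apply sig_ext, sig_ext; assumption.
  - elim (atom_neq_bot (star_sing_atom _ _) E).
  - elim (atom_neq_bot (star_sing_atom _ _) (eq_sym E)).
Qed.

Lemma alpha_dual_surj (h : ChuArr (FObj L1) (chu_dual (FObj L2))) :
  exists C, alpha_dual C = h.
Proof.
  set (E := star_of_gen (chu_rel_starGen h)).
  assert (HE : coatom E \/ E = ltop (star L1 L2)).
  { destruct (chu_rel_starGen h) as [A|A];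
      [left; apply starCo_coatom, A|right; apply star_eq_top, A]. }
  exists (exist _ E HE). apply chuarr_ext.
  - intros [a [Ha|Ha]]; apply sig_ext; simpl.
    + apply (lsup_atoms_eq (cal_atomistic L2)). intros p Hp.
      rewrite (atom_pair_irrel (proj1_sig E) Ha Hp). reflexivity.
    + assert (Ea : (exist _ a (or_intror Ha) : cA (FObj L1)) = cA0 (FObj L1))
        by (apply sig_ext, Ha).
      rewrite Ea, (cf0 h), Ha. apply slice2_bot.
  - intros [b [Hb|Hb]]; apply sig_ext; simpl.
    + apply (lsup_atoms_eq (cal_atomistic L1)). intros p Hp.
      rewrite (atom_pair_irrel (proj1_sig E) Hp Hb).
      exact (FObj_dual_galois h (FAt (exist _ p Hp)) (FAt (exist _ b Hb))).
    + assert (Eb : (exist _ b (or_intror Hb) : cA (FObj L2)) = cA0 (FObj L2))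
        by (apply sig_ext, Hb).
      rewrite Eb, (cg0 h : cg h (cA0 (FObj L2)) = cX0 (FObj L1)), Hb. apply slice1_bot.
Qed.

Lemma alpha_dual_inj (C C' : cX (FObj (star L1 L2))) : alpha_dual C = alpha_dual C' -> C = C'.
Proof.
  intro E. apply sig_ext, star_ext. intros [[p1 H1] [p2 H2]].
  assert (E1 : slice2 (proj1_sig C) p1 = slice2 (proj1_sig C') p1)
    by exact (f_equal (fun k : ChuArr (FObj L1) (chu_dual (FObj L2)) =>
                         proj1_sig (cf k (FAt (exist _ p1 H1)))) E).
  rewrite <- (proj2 (slice2_spec (proj2_sig C) H1) p2 H2),
          <- (proj2 (slice2_spec (proj2_sig C') H1) p2 H2), E1.
  reflexivity.
Qed.

Lemma alpha_iso : chu_is_iso alpha.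
Proof.
  apply chu_is_iso_bij;
    [exact alpha_pair_surj|exact alpha_pair_inj|exact alpha_dual_surj|exact alpha_dual_inj].
Qed.

End Alpha.

(** * Naturality *)

Section Naturality.
Variables L1 L2 M1 M2 : CalObj.
Variables (f1 : CalArr L1 M1) (f2 : CalArr L2 M2) (h : CalArr (star L1 L2) (star M1 M2)).
Hypothesis Hh : is_star_arr f1 f2 h.

Lemma star_arr_sing (p1 : At L1) (p2 : At L2)
  (Hf1 : atom (f1 (proj1_sig p1))) (Hf2 : atom (f2 (proj1_sig p2))) :
  h (star_sing p1 p2) = star_sing (exist _ _ Hf1) (exist _ _ Hf2).
Proof.
  apply star_ext. intro q.
  exact (proj1 (@Hh p1 p2 (star_sing p1 p2) (fun q => iff_refl _))
           (exist _ _ Hf1) (exist _ _ Hf2) eq_refl eq_refl q).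
Qed.

Lemma star_arr_sing_bot (p1 : At L1) (p2 : At L2) :
  f1 (proj1_sig p1) = lbot M1 \/ f2 (proj1_sig p2) = lbot M2 ->
  h (star_sing p1 p2) = lbot (star M1 M2).
Proof. exact (proj2 (@Hh p1 p2 (star_sing p1 p2) (fun q => iff_refl _))). Qed.

Lemma radj_coatom_or_top (Y : star M1 M2) :
  coatom Y \/ Y = ltop (star M1 M2) -> coatom (radj h Y) \/ radj h Y = ltop (star L1 L2).
Proof. intros [A| ->]; [apply acoatom, A|right; apply radj_top]. Qed.

(* Both sides are compared on atoms q; the Galois connections of f2 and h move the
   question to whether h maps the atom {(a, q)} below Y. *)
Lemma slice2_radj (Y : star M1 M2) (HY : coatom Y \/ Y = ltop (star M1 M2))
  (a : L1) (Ha : atom a \/ a = lbot L1) :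
  slice2 (radj h Y) a = radj f2 (slice2 Y (f1 a)).
Proof.
  destruct Ha as [Ha| ->].
  2:{ rewrite slice2_bot, arr_bot, slice2_bot, radj_top. reflexivity. }
  apply (eq_by_atoms (cal_atomistic L2)). intros q Hq.
  rewrite (proj2 (slice2_spec (radj_coatom_or_top HY) Ha) q Hq), <- (arr_galois f2),
    <- (star_sing_le (exist _ a Ha) (exist _ q Hq) (radj h Y)), <- (arr_galois h).
  destruct (aatom f1 Ha) as [A1|A1]; [destruct (aatom f2 Hq) as [A2|A2]|].
  - rewrite (star_arr_sing (p1 := exist _ a Ha) (p2 := exist _ q Hq) A1 A2), star_sing_le.
    symmetry; apply (proj2 (slice2_spec HY A1) _ A2).
  - rewrite (star_arr_sing_bot (p1 := exist _ a Ha) (p2 := exist _ q Hq) (or_intror A2)), A2.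
    split; intro; apply bot_le.
  - rewrite (star_arr_sing_bot (p1 := exist _ a Ha) (p2 := exist _ q Hq) (or_introl A1)),
      A1, slice2_bot.
    split; intro; [apply le_top|apply bot_le].
Qed.

Lemma slice1_radj (Y : star M1 M2) (HY : coatom Y \/ Y = ltop (star M1 M2))
  (a : L2) (Ha : atom a \/ a = lbot L2) :
  slice1 (radj h Y) a = radj f1 (slice1 Y (f2 a)).
Proof.
  destruct Ha as [Ha| ->].
  2:{ rewrite slice1_bot, arr_bot, slice1_bot, radj_top. reflexivity. }
  apply (eq_by_atoms (cal_atomistic L1)). intros q Hq.
  rewrite (proj2 (slice1_spec (radj_coatom_or_top HY) Ha) q Hq), <- (arr_galois f1),
    <- (star_sing_le (exist _ q Hq) (exist _ a Ha) (radj h Y)), <- (arr_galois h).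
  destruct (aatom f2 Ha) as [A2|A2]; [destruct (aatom f1 Hq) as [A1|A1]|].
  - rewrite (star_arr_sing (p1 := exist _ q Hq) (p2 := exist _ a Ha) A1 A2), star_sing_le.
    symmetry; apply (proj2 (slice1_spec HY A2) _ A1).
  - rewrite (star_arr_sing_bot (p1 := exist _ q Hq) (p2 := exist _ a Ha) (or_introl A1)), A1.
    split; intro; apply bot_le.
  - rewrite (star_arr_sing_bot (p1 := exist _ q Hq) (p2 := exist _ a Ha) (or_intror A2)),
      A2, slice1_bot.
    split; intro; [apply le_top|apply bot_le].
Qed.

Lemma alpha_natural :
  arr_eq (chu_comp (FArr h) (alpha L1 L2))
         (chu_comp (alpha M1 M2) (tensor_arr (FArr f1) (FArr f2))).
Proof.
  split.
  - intros [[a1 a2]|]; apply sig_ext; [|exact (arr_bot h)].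
    simpl. unfold tens_cf.
    destruct (excluded_middle_informative _) as [e1|n1];
      [apply (f_equal (@proj1_sig _ _)) in e1; apply star_arr_sing_bot; left; exact e1|].
    destruct (excluded_middle_informative _) as [e2|n2];
      [apply (f_equal (@proj1_sig _ _)) in e2; apply star_arr_sing_bot; right; exact e2|].
    apply star_arr_sing.
  - intro Y. apply chuarr_ext; intro a; apply sig_ext; simpl;
      [apply slice2_radj|apply slice1_radj]; first [exact (proj2_sig Y)|exact (proj2_sig a)].
Qed.

End Naturality.

Theorem lemma5p4 :
  (exists alpha : forall L1 L2 : CalObj,
       ChuArr (tensor (FObj L1) (FObj L2)) (FObj (star L1 L2)),
     (forall L1 L2 : CalObj, chu_is_iso (alpha L1 L2)) /\
     (forall (L1 L2 M1 M2 : CalObj) (f1 : CalArr L1 M1) (f2 : CalArr L2 M2)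
        (h : CalArr (star L1 L2) (star M1 M2)),
        is_star_arr f1 f2 h ->
        arr_eq (chu_comp (FArr h) (alpha L1 L2))
               (chu_comp (alpha M1 M2) (tensor_arr (FArr f1) (FArr f2))))) /\
  (forall U V : ChuObj,
     (exists L : CalObj, chu_iso U (FObj L)) ->
     (exists L : CalObj, chu_iso V (FObj L)) ->
     exists L : CalObj, chu_iso (tensor U V) (FObj L)).
Proof.
  split.
  - exists alpha. split; [exact alpha_iso|]. intros; apply alpha_natural; assumption.
  - intros U V [L1 [u Hu]] [L2 [v Hv]]. exists (star_obj L1 L2).
    exists (chu_comp (alpha L1 L2) (tensor_arr u v)).
    apply chu_is_iso_comp; [apply tensor_arr_iso; assumption|apply alpha_iso].
Qed.
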